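(* Let $A, B \in\mathbb{C}^{n\times n}$ be matrices of index at most $1$. If $A\leq^{GD1}B$, then $A\leq\# B$ (right sharp partial order), i.e. $A^2=BA$ and $R(A^* )\subseteq R(B^* )$.
   Context: For $A\in\mathbb{C}^{n\times n}$, $ind(A)$ is the smallest nonnegative integer $k$ with $\mathrm{rank}(A^k)=\mathrm{rank}(A^{k+1})$. $A\{1\}$ is the set of matrices $X$ with $AXA=A$. With $k=ind(A)$, $A\{GD\}$ is the set of matrices $X$ with $AXA=A$, $XA^{k+1}=A^k$, $A^{k+1}X=A^k$ (G-Drazin inverses). A GD1 inverse of $A$ is a matrix $A^{GD1}=A^{GD}AA^-$ with $A^-\in A\{1\}$, $A^{GD}\in A\{GD\}$. We write $A\leq^{GD1}B$ if $AA^{GD1}=BA^{GD1}$ and $A^{GD1}A=A^{GD1}B$ for some GD1 inverse $A^{GD1}$ of $A$. $A^*$ is the conjugate transpose and $R(\cdot)$ the range. *)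

From mathcomp Require Import all_boot all_order all_algebra.
Set Implicit Arguments. Unset Strict Implicit. Unset Printing Implicit Defensive.
Import Order.TTheory GRing.Theory Num.Theory.
Local Open Scope ring_scope.

(* Matrices over C : numClosedFieldType (e.g. complex numbers), with the
   conjugation Num.conj (notation x^* ). *)

Definition ctmx (C : numClosedFieldType) (m n : nat) (A : 'M[C]_(m, n))
  : 'M[C]_(n, m) := map_mx Num.conj A^T.

(* R(A) ⊆ R(B) for the column spaces (ranges) of A and B:
   column space of X = row space of X^T *)
Definition range_sub (C : numClosedFieldType) (m p q : nat)
  (A : 'M[C]_(m, p)) (B : 'M[C]_(m, q)) : Prop := (A^T <= B^T)%MS.

Definition is_index (C : numClosedFieldType) (n : nat) (A : 'M[C]_n) (k : nat)
  : Prop :=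
  \rank (A ^+ k) = \rank (A ^+ k.+1) /\
  (forall j, (j < k)%N -> \rank (A ^+ j) <> \rank (A ^+ j.+1)).

Definition inner_inv (C : numClosedFieldType) (n : nat) (A X : 'M[C]_n) : Prop :=
  A *m X *m A = A.

Definition GD_inv (C : numClosedFieldType) (n : nat) (A X : 'M[C]_n) : Prop :=
  exists k, is_index A k /\
    [/\ A *m X *m A = A, X *m A ^+ k.+1 = A ^+ k & A ^+ k.+1 *m X = A ^+ k].

Definition GD1_inv (C : numClosedFieldType) (n : nat) (A X : 'M[C]_n) : Prop :=
  exists G Am, GD_inv A G /\ inner_inv A Am /\ X = G *m A *m Am.

Definition GD1_le (C : numClosedFieldType) (n : nat) (A B : 'M[C]_n) : Prop :=
  exists X, GD1_inv A X /\ A *m X = B *m X /\ X *m A = X *m B.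

Definition right_sharp_le (C : numClosedFieldType) (n : nat) (A B : 'M[C]_n)
  : Prop := A *m A = B *m A /\ range_sub (ctmx A) (ctmx B).

From mathcomp Require Import all_boot all_order all_algebra.
Set Implicit Arguments. Unset Strict Implicit. Unset Printing Implicit Defensive.
Import GRing.Theory Num.Theory.
Local Open Scope ring_scope.

(* A GD1 inverse X = G A A^- of A is an inner inverse of A (A X A = A G A = A)
   with X A = G A, so X inherits the G-Drazin identity X A^(j+1) = A^j for
   every j >= ind(A).  From A X = B X and X A = X B we get A = B X A and
   A = A X B; the latter puts the rows of A in the row space of B, i.e.
   R(A^* ) in R(B^* ), and for ind(A) <= 1 the former gives
   A^2 = B (X A^2) = B A. *)

Section Index.

Variables (C : numClosedFieldType) (n : nat).
Implicit Types (A G X : 'M[C]_n) (k j : nat).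

Lemma is_index_unique A k1 k2 : is_index A k1 -> is_index A k2 -> k1 = k2.
Proof.
move=> [eq1 neq1] [eq2 neq2].
by case: (ltngtP k1 k2) => // [/neq2 | /neq1].
Qed.

Lemma GD_inv_mulmx_exp A G k j :
  GD_inv A G -> is_index A k -> (k <= j)%N -> G *m A ^+ j.+1 = A ^+ j.
Proof.
move=> [k' [idx' [_ GAk _]]] idx; rewrite (is_index_unique idx' idx) in GAk.
elim: j => [|j IHj]; first by rewrite leqn0 => /eqP k0; rewrite -k0.
rewrite leq_eqVlt => /predU1P [<- // | /IHj GAj].
by rewrite exprSr -mulmxE mulmxA GAj mulmxE -exprSr.
Qed.

Lemma GD1_inv_inner A X : GD1_inv A X -> inner_inv A X.
Proof.
move=> [G [Am [[k [_ [AGA _ _]]] [AAmA ->]]]]; rewrite /inner_inv in AAmA *.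
by rewrite -!mulmxA (mulmxA A Am A) AAmA !mulmxA AGA.
Qed.

Lemma GD1_inv_mulmx_exp A X k j :
  GD1_inv A X -> is_index A k -> (k <= j)%N -> X *m A ^+ j.+1 = A ^+ j.
Proof.
move=> [G [Am [GD_G [AAmA ->]]]] idx le_kj; rewrite /inner_inv in AAmA.
have XA : G *m A *m Am *m A = G *m A by rewrite -!mulmxA (mulmxA A) AAmA.
rewrite exprS -mulmxE mulmxA XA -mulmxA mulmxE -exprS.
exact: GD_inv_mulmx_exp GD_G idx le_kj.
Qed.

End Index.

Lemma range_sub_ctmx (C : numClosedFieldType) (m p q : nat)
    (A : 'M[C]_(p, m)) (B : 'M[C]_(q, m)) :
  range_sub (ctmx A) (ctmx B) <-> (A <= B)%MS.
Proof. by rewrite /range_sub /ctmx !map_trmx !trmxK map_submx. Qed.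

Theorem corollary2p13 (C : numClosedFieldType) (n : nat) (A B : 'M[C]_n) :
  (exists k, is_index A k /\ (k <= 1)%N) ->
  (exists k, is_index B k /\ (k <= 1)%N) ->
  GD1_le A B ->
  A *m A = B *m A /\ range_sub (ctmx A) (ctmx B).
Proof.
move=> [k [idxA le_k1]] _ [X [GD1X [AX_BX XA_XB]]].
have AXA : A *m X *m A = A := GD1_inv_inner GD1X.
have XA2 : X *m (A *m A) = A := GD1_inv_mulmx_exp GD1X idxA le_k1.
split.
- by rewrite -{1}AXA AX_BX -!mulmxA XA2.
- have AXB : A = A *m X *m B by rewrite -mulmxA -XA_XB mulmxA AXA.
  by apply/range_sub_ctmx; rewrite AXB submxMl.
Qed.
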